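(* Let $\alpha=\alpha(0)$ be a graph function on a strongly connected digraph $G$, fix a fair infinite sequence of raising operations, and let $\alpha(t)$ and $r(t)$ be the resulting graph functions and raising vectors. Then the sequence $r(t)$ is (coordinatewise) non-decreasing and bounded above, and hence converges to a limit vector $r^*$ as $t\to\infty$.
   Context: $G$ is a strongly connected directed graph on vertex set $\{1,\dots,n\}$ (self-loops allowed); a graph function assigns a real weight $\alpha_{uv}$ to each edge. $\alpha_v^{\text{in}}=\max_{u:(u,v)\in G}\alpha_{uv}$, $\alpha_v^{\text{out}}=\max_{w:(v,w)\in G}\alpha_{vw}$, $\rho^R_v=\max\{0,\alpha_v^{\text{out}}-\alpha_v^{\text{in}}\}$. A raising operation at $v$: if $\rho^R_v>0$, add $\rho^R_v/2$ to each $\alpha_{uv}$ ($u\ne v$) and subtract $\rho^R_v/2$ from each $\alpha_{vw}$ ($w\ne v$), self-loop unchanged; otherwise do nothing. A sequence of operations is fair if every vertex occurs infinitely often. The raising vector is defined by $r(0)=0$ and, if the $t$-th operation is at vertex $v$, $r_v(t)=r_v(t-1)+\rho^R_v/2$ (with $\rho^R_v$ computed in $\alpha(t-1)$) and $r_u(t)=r_u(t-1)$ for $u\ne v$; thus $\alpha_{uv}(t)=\alpha_{uv}(0)+r_v(t)-r_u(t)$. *)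

From HB Require Import structures.
From mathcomp Require Import all_boot all_order all_algebra.
From mathcomp Require Import all_classical all_reals all_analysis.
Set Implicit Arguments. Unset Strict Implicit. Unset Printing Implicit Defensive.
Import Order.TTheory GRing.Theory Num.Theory.
Local Open Scope ring_scope.

Section Raising.
Variables (R : realType) (n : nat) (G : rel 'I_n).

(* a graph function: weight alpha u v on edge (u,v); values off edges are irrelevant *)
Definition graph_fun := 'I_n -> 'I_n -> R.

Definition strongly_connected := forall u v : 'I_n, connect G u v.

(* maximum of a finite nonempty list (0 on the empty list, which only happens
   in the degenerate edgeless one-vertex graph) *)
Definition seqmax (s : seq R) : R := foldr Num.max (head 0 s) s.

Definition alpha_in (a : graph_fun) (v : 'I_n) : R :=
  seqmax [seq a u v | u <- enum 'I_n & G u v].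
Definition alpha_out (a : graph_fun) (v : 'I_n) : R :=
  seqmax [seq a v w | w <- enum 'I_n & G v w].

Definition rhoR (a : graph_fun) (v : 'I_n) : R :=
  Num.max 0 (alpha_out a v - alpha_in a v).

Definition raise (a : graph_fun) (v : 'I_n) : graph_fun :=
  fun u w =>
    a u w + (if (w == v) && (u != v) then rhoR a v / 2 else 0)
          - (if (u == v) && (w != v) then rhoR a v / 2 else 0).

Definition fair (s : nat -> 'I_n) := forall (v : 'I_n) (N : nat), exists2 t, (N <= t)%N & s t = v.

(* alpha(t): the (t+1)-th operation is performed at vertex s t *)
Fixpoint alpha_seq (a0 : graph_fun) (s : nat -> 'I_n) (t : nat) : graph_fun :=
  match t with
  | 0 => a0
  | t'.+1 => raise (alpha_seq a0 s t') (s t')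
  end.

Fixpoint r_seq (a0 : graph_fun) (s : nat -> 'I_n) (t : nat) : 'I_n -> R :=
  match t with
  | 0 => fun _ => 0
  | t'.+1 => fun v => r_seq a0 s t' v +
       (if v == s t' then rhoR (alpha_seq a0 s t') v / 2 else 0)
  end.

End Raising.

From HB Require Import structures.
From mathcomp Require Import all_boot all_order all_algebra.
From mathcomp Require Import all_classical all_reals all_analysis.
From mathcomp Require Import lra zify.
Import Order.TTheory GRing.Theory Num.Theory numFieldNormedType.Exports.

(* Since alpha(t)_uv = alpha(0)_uv + r_v(t) - r_u(t), everything is a statement
   about the potential r(t).  Call a potential phi balanced if, after
   reweighting alpha(0) by phi, the largest weight leaving each vertex is at
   most some weight entering it.  A raising step at v starting from r <= phi
   then cannot push r_v above phi_v, so r(t) <= phi for all t, and a monotone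
   bounded sequence converges.  A balanced potential exists: with mu the
   maximal mean weight of a cycle, the longest-walk distances for the weights
   alpha(0) - mu form a max-plus eigenvector, and its negative is balanced. *)

Set Implicit Arguments.
Unset Strict Implicit.
Unset Printing Implicit Defensive.

Local Open Scope classical_set_scope.
Local Open Scope ring_scope.

Section Walks.
Variables (T : finType) (e : rel T).

Definition walk (f : nat -> T) m := forall i, (i < m)%N -> e (f i) (f i.+1).
Definition closed_walk f m := walk f m /\ f m = f 0%N.

Definition tailw (f : nat -> T) i : nat -> T := fun k => f (i + k)%N.
Definition catw (f : nat -> T) m (g : nat -> T) : nat -> T :=
  fun i => if (i <= m)%N then f i else g (i - m)%N.
Definition edgew (u v : T) : nat -> T := fun i => if i == 0%N then u else v.

Lemma eq_walk f g m :
  (forall i, (i <= m)%N -> f i = g i) -> walk f m -> walk g m.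
Proof. by move=> fg wf i im; rewrite -!fg ?wf // ltnW. Qed.

Lemma walk_prefix f m i : (i <= m)%N -> walk f m -> walk f i.
Proof. by move=> im wf k ki; apply: wf; lia. Qed.

Lemma walk_tail f m i : walk f m -> walk (tailw f i) (m - i).
Proof. by move=> wf k km; rewrite /tailw addnS; apply: wf; lia. Qed.

Lemma walk_join f i m : walk f i -> walk (tailw f i) m -> walk f (i + m).
Proof.
move=> wf wt k km; case: (ltnP k i) => [|ik]; first exact: wf.
by have := wt (k - i)%N; rewrite /tailw addnS subnKC //; apply; lia.
Qed.

Lemma catw_head f m g i : (i <= m)%N -> catw f m g i = f i.
Proof. by rewrite /catw => ->. Qed.

Lemma catw_tail f m g i :
  f m = g 0%N -> (m <= i)%N -> catw f m g i = g (i - m)%N.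
Proof.
rewrite /catw => fg mi; case: leqP => // im.
have -> : i = m by lia.
by rewrite subnn.
Qed.

Lemma catw0 f m g : catw f m g 0 = f 0%N.
Proof. exact: catw_head. Qed.

Lemma catw_last f m g m' : f m = g 0%N -> catw f m g (m + m') = g m'.
Proof. by move=> fg; rewrite catw_tail ?addKn ?leq_addr. Qed.

Lemma tailw_catw f m g i : f m = g 0%N -> tailw (catw f m g) m i = g i.
Proof. exact: catw_last. Qed.

Lemma walk_catw f m g m' :
  f m = g 0%N -> walk f m -> walk g m' -> walk (catw f m g) (m + m').
Proof.
move=> fg wf wg; apply: walk_join.
  by apply: eq_walk wf => i im; rewrite catw_head.
by apply: eq_walk wg => i _; rewrite tailw_catw.
Qed.

Lemma walk_edgew u v : e u v -> walk (edgew u v) 1.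
Proof. by move=> uv [|]. Qed.

Lemma connect_walk u v : connect e u v ->
  exists f m, [/\ walk f m, f 0%N = u & f m = v].
Proof.
move=> /connectP[p pth ->]; exists (nth u (u :: p)), (size p); split => //.
  by move=> i ip; move/pathP: pth => /(_ u i ip); case: i ip.
by rewrite -[size p]/((size (u :: p)).-1) nth_last.
Qed.

Lemma connect_in_edge v y : e v y -> connect e y v -> exists x, e x v.
Proof.
move=> vy /connect_walk[f [[|m] [wf f0 fm]]].
  by exists v; rewrite -[X in e _ X]fm f0.
by exists (f m); rewrite -fm; apply: wf.
Qed.

Lemma connect_out_edge x v : e x v -> connect e v x -> exists y, e v y.
Proof.
move=> xv /connect_walk[f [[|m] [wf f0 fm]]].
  by exists v; rewrite -[X in e X _]f0 fm.
by exists (f 1%N); rewrite -f0; apply: wf.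
Qed.

Lemma fin_pigeonhole (f : nat -> T) m : (#|T| < m)%N ->
  exists i j, [/\ (i < j)%N, (j < m)%N & f i = f j].
Proof.
move=> Tm; apply: contrapT => nrep.
suff /leq_card : injective (fun i : 'I_m => f i) by rewrite card_ord; lia.
move=> i j fij; apply: ord_inj.
case: (ltngtP i j) => // lt; exfalso; apply: nrep.
  by exists i, j; split.
by exists j, i; split.
Qed.

Lemma closed_walk_shortcut f m i j : (i < j)%N -> (j <= m)%N -> f i = f j ->
  closed_walk f m ->
  closed_walk (tailw f i) (j - i) /\
  closed_walk (catw f i (tailw f j)) (i + (m - j)).
Proof.
move=> ij jm fij [wf cf]; have fji : f i = tailw f j 0 by rewrite /tailw addn0.
split; split.
- by apply: walk_prefix (walk_tail (i:=i) wf); lia.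
- by rewrite /tailw subnKC ?addn0 // ltnW.
- by apply: walk_catw (walk_tail (i:=j) wf) => //; apply: walk_prefix wf; lia.
by rewrite catw_last // catw0 /tailw subnKC.
Qed.

Lemma short_closed_walk f m : (0 < m)%N -> closed_walk f m ->
  exists g k, [/\ (0 < k)%N, (k <= #|T|)%N & closed_walk g k].
Proof.
have [N] := ubnP m; elim: N => // N IH in m f *; rewrite ltnS => mN m0 cf.
case: (leqP m #|T|) => Tm; first by exists f, m.
have [i [j [ij jm fij]]] := fin_pigeonhole f Tm.
have [cloop _] := closed_walk_shortcut ij (ltnW jm) fij cf.
by apply: (IH (j - i)%N (tailw f i)) => //; lia.
Qed.

End Walks.

Section Weights.
Variables (R : realDomainType) (T : finType) (a : T -> T -> R).

Definition weight (f : nat -> T) m := \sum_(0 <= i < m) a (f i) (f i.+1).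

Lemma weight0 f : weight f 0 = 0.
Proof. by rewrite /weight big_geq. Qed.

Lemma weightS f m : weight f m.+1 = weight f m + a (f m) (f m.+1).
Proof. by rewrite /weight big_nat_recr. Qed.

Lemma eq_weight f g m :
  (forall i, (i <= m)%N -> f i = g i) -> weight f m = weight g m.
Proof. by move=> fg; apply: eq_big_nat => i /andP[_ im]; rewrite !fg // ltnW. Qed.

Lemma weight_split f m i :
  (i <= m)%N -> weight f m = weight f i + weight (tailw f i) (m - i).
Proof.
move=> im; rewrite /weight (big_cat_nat (leq0n i) im) /=; congr (_ + _).
rewrite -{1}[i]add0n big_addn.
by apply: eq_bigr => k _; rewrite /tailw addnS (addnC i).
Qed.

Lemma weight_catw f m g m' :
  f m = g 0%N -> weight (catw f m g) (m + m') = weight f m + weight g m'.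
Proof.
move=> fg; rewrite (weight_split _ (leq_addr m' m)) addKn; congr (_ + _).
  by apply: eq_weight => i im; rewrite catw_head.
by apply: eq_weight => i _; rewrite tailw_catw.
Qed.

Lemma weight_shortcut f m i j : (i <= j)%N -> (j <= m)%N -> f i = f j ->
  weight f m =
  weight (tailw f i) (j - i) + weight (catw f i (tailw f j)) (i + (m - j)).
Proof.
move=> ij jm fij; have fji : f i = tailw f j 0 by rewrite /tailw addn0.
rewrite weight_catw // (weight_split f (leq_trans ij jm)).
rewrite (@weight_split (tailw f i) (m - i) (j - i)); last lia.
have -> : (m - i - (j - i) = m - j)%N by lia.
rewrite (@eq_weight (tailw (tailw f i) (j - i)) (tailw f j)); last first.
  by move=> k _; rewrite /tailw addnA subnKC.
by rewrite addrCA.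
Qed.

Lemma weight_edgew u v : weight (edgew u v) 1 = a u v.
Proof. by rewrite /weight big_nat1. Qed.

Lemma closed_walk_weight_le0 (e : rel T) :
  (forall g k, (0 < k)%N -> (k <= #|T|)%N -> closed_walk e g k ->
     weight g k <= 0) ->
  forall f m, closed_walk e f m -> weight f m <= 0.
Proof.
move=> short f m; have [N] := ubnP m; elim: N => // N IH in m f *.
rewrite ltnS => mN cf; case: (posnP m) => [->|m0]; first by rewrite weight0.
case: (leqP m #|T|) => Tm; first exact: short.
have [i [j [ij jm fij]]] := fin_pigeonhole f Tm.
have [cloop cskip] := closed_walk_shortcut ij (ltnW jm) fij cf.
rewrite (weight_shortcut (ltnW ij) (ltnW jm) fij) -[0]addr0.
by rewrite lerD // (IH _ _ _ cloop, IH _ _ _ cskip) //; lia.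
Qed.

End Weights.

Lemma weight_subc (R : realDomainType) (T : finType) (a : T -> T -> R) c f m :
  weight (fun u w => a u w - c) f m = weight a f m - m%:R * c.
Proof. by rewrite /weight sumrB sumr_const_nat subn0 mulr_natl. Qed.

Section MaxCycleMean.
Variables (R : realFieldType) (T : finType) (e : rel T) (a : T -> T -> R).

Lemma max_cycle_mean : (exists f m, (0 < m)%N /\ closed_walk e f m) ->
  exists mu f0 m0, [/\ (0 < m0)%N, closed_walk e f0 m0,
    weight a f0 m0 = m0%:R * mu &
    forall f m, closed_walk e f m -> weight a f m <= m%:R * mu].
Proof.
move=> [f [m [m0 cf]]]; have [g [k [k0 kT cg]]] := short_closed_walk m0 cf.
(* Closed walks of length at most #|T| are coded by a finite type, on which
   the mean weight attains its maximum. *)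
pose code := ('I_#|T|.+1 * {ffun 'I_#|T|.+1 -> T})%type.
pose walk_of (x : code) (i : nat) : T := x.2 (inord i).
pose len (x : code) : nat := x.1.
pose is_cycle (x : code) :=
  (0 < len x)%N && `[< closed_walk e (walk_of x) (len x) >].
pose mean (x : code) := weight a (walk_of x) (len x) / (len x)%:R.
have encode h j : (0 < j)%N -> (j <= #|T|)%N -> closed_walk e h j ->
    exists2 x, is_cycle x & weight a h j = j%:R * mean x.
  move=> j0 jT [wh ch].
  pose x : code := (inord j, [ffun i : 'I_#|T|.+1 => h i]).
  have hx i : (i <= #|T|)%N -> h i = walk_of x i.
    by move=> iT; rewrite /walk_of ffunE inordK.
  have lenx : len x = j by rewrite /len inordK.
  have hxj i : (i <= j)%N -> h i = walk_of x i by move=> ij; apply: hx; lia.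
  exists x; last first.
    by rewrite /mean lenx (eq_weight a hxj) mulrC divfK ?pnatr_eq0 -?lt0n.
  rewrite /is_cycle lenx j0; apply/asboolP; split; first exact: eq_walk hxj wh.
  by rewrite -!hxj.
have [x0 Px0 _] := encode g k k0 kT cg.
case: (arg_maxP mean Px0) => x /andP[x0len /asboolP cx] maxx.
exists (mean x), (walk_of x), (len x); split => //.
  by rewrite /mean mulrC divfK // pnatr_eq0 -lt0n.
move=> h j ch; rewrite -subr_le0 -weight_subc.
apply: closed_walk_weight_le0 ch => h' j' j0 jT ch'; rewrite weight_subc subr_le0.
have [y Py ->] := encode h' j' j0 jT ch'.
by rewrite ler_pM2l ?ltr0n //; apply: maxx.
Qed.

End MaxCycleMean.

Section MaxPlusEigenvector.
Variables (R : realType) (T : finType) (e : rel T) (a : T -> T -> R).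
Hypothesis strong : forall u v, connect e u v.
Hypothesis closed_walk_le0 : forall f m, closed_walk e f m -> weight a f m <= 0.
Variables (f0 : nat -> T) (m0 : nat).
Hypotheses (m0_gt0 : (0 < m0)%N) (cf0 : closed_walk e f0 m0).
Hypothesis wf0 : weight a f0 m0 = 0.

Let root := f0 0%N.

Let reach v : set R :=
  [set x | exists f m, [/\ walk e f m, f 0%N = root, f m = v & x = weight a f m]].

Let dist v := sup (reach v).

(* A walk root -> v closed up by a fixed walk v -> root has weight <= 0. *)
Let reach_sup v : has_sup (reach v).
Proof.
split.
  have [f [m [wf f0r fmv]]] := connect_walk (strong root v).
  by exists (weight a f m), f, m.
have [g [m' [wg g0v gm']]] := connect_walk (strong v root).
exists (- weight a g m') => _ [f [m [wf f0r fmv ->]]].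
have fg : f m = g 0%N by rewrite fmv g0v.
have := closed_walk_le0 (conj (walk_catw fg wf wg) _).
rewrite weight_catw // catw_last // catw0 gm' f0r.
by move=> /(_ erefl) closed_le0; rewrite -subr_le0 opprK.
Qed.

Let dist_ge f m : walk e f m -> f 0%N = root -> weight a f m <= dist (f m).
Proof. by move=> wf f0r; apply: (sup_upper_bound (reach_sup _)); exists f, m. Qed.

Let dist_edge x v : e x v -> dist x + a x v <= dist v.
Proof.
move=> xv; rewrite -lerBrDr; apply: ge_sup (reach_sup x).1 _.
move=> _ [f [m [wf f0r fmx ->]]].
rewrite lerBrDr -(weight_edgew a x v) -weight_catw ?fmx //.
have fe : f m = edgew x v 0 by rewrite fmx.
have := dist_ge (walk_catw fe wf (walk_edgew xv)).
by rewrite catw0 catw_last //; apply.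
Qed.

Let dist_last_edge f m : walk e f m.+1 -> f 0%N = root ->
  weight a f m.+1 <= dist (f m) + a (f m) (f m.+1).
Proof.
move=> wf f0r; rewrite weightS lerD2r.
by apply: dist_ge f0r; apply: walk_prefix wf.
Qed.

Let dist_tight v x0 : e x0 v -> exists2 x, e x v & dist v <= dist x + a x v.
Proof.
move=> x0v.
case: (@arg_maxP _ _ _ x0 [pred x | e x v] (fun x => dist x + a x v) x0v).
move=> x /= xv xmax; exists x => //.
have walk_le f m : walk e f m.+1 -> f 0%N = root -> f m.+1 = v ->
    weight a f m.+1 <= dist x + a x v.
  move=> wf f0r fv; apply: le_trans (dist_last_edge wf f0r) _; rewrite fv.
  by apply: xmax; rewrite /= -fv; apply: wf.
apply: ge_sup (reach_sup v).1 _ => _ [f [[|m] [wf f0r fmv ->]]]; last first.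
  exact: walk_le.
(* The empty walk at [v = root] is dominated by the zero-weight cycle. *)
rewrite weight0; case: m0 m0_gt0 cf0 wf0 => // m1 _ [wf1 cf1] <-.
by apply: walk_le; rewrite // cf1 -fmv f0r.
Qed.

Lemma maxplus_eigenvector : exists d : T -> R,
  (forall x v, e x v -> d x + a x v <= d v) /\
  (forall v x0, e x0 v -> exists2 x, e x v & d v <= d x + a x v).
Proof. by exists dist; split; [exact: dist_edge | exact: dist_tight]. Qed.

End MaxPlusEigenvector.

Lemma ler_sum_term (R : numDomainType) (I : finType) (F : I -> R) i :
  (forall j, 0 <= F j) -> F i <= \sum_j F j.
Proof. by move=> F0; rewrite (bigD1 i) //= lerDl sumr_ge0. Qed.

Lemma foldr_max_ge (R : realDomainType) (s : seq R) x0 x :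
  x \in s -> x <= foldr Num.max x0 s.
Proof.
elim: s => //= y s IH; rewrite in_cons le_max => /orP[/eqP->|/IH->].
  by rewrite lexx.
by rewrite orbT.
Qed.

Lemma foldr_max_mem (R : realDomainType) (s : seq R) x0 :
  foldr Num.max x0 s \in x0 :: s.
Proof.
elim: s => /= [|y s IH]; first by rewrite mem_seq1.
rewrite !in_cons; case: leP => _; last by rewrite eqxx orbT.
by move: IH; rewrite in_cons => /orP[->|->]; rewrite ?orbT.
Qed.

Lemma seqmax_ge (R : realType) (s : seq R) x : x \in s -> x <= seqmax s.
Proof. exact: foldr_max_ge. Qed.

Lemma seqmax_mem (R : realType) (s : seq R) : s != [::] -> seqmax s \in s.
Proof.
case: s => // y s _; have := foldr_max_mem (y :: s) y.
by rewrite /seqmax /= in_cons => /orP[/eqP->|]; rewrite ?mem_head.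
Qed.

Section Balanced.
Variables (R : realType) (T : finType) (e : rel T).

Definition reweight (a : T -> T -> R) (p : T -> R) : T -> T -> R :=
  fun u w => a u w + p w - p u.

Definition balanced (b : T -> T -> R) :=
  forall v y, e v y -> exists2 x, e x v & forall y', e v y' -> b v y' <= b x v.

Hypothesis strong : forall u v, connect e u v.

Lemma exists_balanced_potential (a : T -> T -> R) :
  exists phi : T -> R, (forall v, 0 <= phi v) /\ balanced (reweight a phi).
Proof.
case: (pselect (exists u w, e u w)) => [[u [w uw]]|noedge]; last first.
  by exists (fun=> 0); split => // v y vy; case: noedge; exists v, y.
have [|mu [f0 [m0 [m0_gt0 cf0 wf0 mu_max]]]] := @max_cycle_mean _ _ e a.
  have [h [m [wh h0 hm]]] := connect_walk (strong w u).
  have uw0 : edgew u w 1 = h 0%N by rewrite h0.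
  exists (catw (edgew u w) 1 h), (1 + m)%N; split => //; split.
    exact: walk_catw uw0 (walk_edgew uw) wh.
  by rewrite catw_last // catw0 hm.
pose b u w := a u w - mu.
have [||d [d_edge d_tight]] :=
    @maxplus_eigenvector _ _ e b strong _ f0 m0 m0_gt0 cf0 _.
- by move=> f m cf; rewrite weight_subc subr_le0; apply: mu_max.
- by rewrite weight_subc wf0 subrr.
exists (fun v => \sum_u `|d u| - d v); split.
  by move=> v; rewrite subr_ge0; apply: le_trans (ler_norm _) (ler_sum_term _ _).
move=> v y vy; have [x0 x0v] := connect_in_edge vy (strong y v).
have [x xv dx] := d_tight v x0 x0v; exists x => // y' vy'.
by have := d_edge v y' vy'; rewrite /reweight /b in dx * => dy; lra.
Qed.

End Balanced.

Section Raising.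
Variables (R : realType) (n : nat) (G : rel 'I_n).

Lemma alpha_seq_reweight (a0 : graph_fun R n) s t :
  alpha_seq G a0 s t = reweight a0 (r_seq G a0 s t).
Proof.
elim: t => [|t IH] /=; apply/funext => u; apply/funext => w.
  by rewrite /reweight subr0 addr0.
rewrite /raise IH /reweight.
case: (eqVneq w (s t)) => [->|wn]; case: (eqVneq u (s t)) => [->|un] /=;
  rewrite ?eqxx ?(negbTE wn) ?(negbTE un) /=; lra.
Qed.

Lemma rhoR_ge0 (a : graph_fun R n) v : 0 <= rhoR G a v.
Proof. by rewrite le_max lexx. Qed.

Lemma r_seq_nondecreasing (a0 : graph_fun R n) s t v :
  r_seq G a0 s t v <= r_seq G a0 s t.+1 v.
Proof. by rewrite /= lerDl; case: ifP => // _; rewrite divr_ge0 ?rhoR_ge0. Qed.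

Lemma alpha_in_ge (a : graph_fun R n) x v : G x v -> a x v <= alpha_in G a v.
Proof. by move=> xv; apply/seqmax_ge/map_f; rewrite mem_filter xv mem_enum. Qed.

Lemma alpha_out_attained (a : graph_fun R n) v y : G v y ->
  exists2 y', G v y' & alpha_out G a v = a v y'.
Proof.
move=> vy.
have /mapP[y' + ->] : alpha_out G a v \in [seq a v w | w <- enum 'I_n & G v w].
  apply: seqmax_mem; apply/eqP => /(congr1 size).
  rewrite size_map size_filter; apply/eqP; rewrite -lt0n -has_count.
  by apply/hasP; exists y; rewrite ?mem_enum.
by rewrite mem_filter => /andP[vy' _]; exists y'.
Qed.

Hypothesis strong : strongly_connected G.

Lemma rhoR_no_out_edge (a : graph_fun R n) v :
  (forall y, ~~ G v y) -> rhoR G a v = 0.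
Proof.
move=> noout; have noin u : G u v = false.
  apply/negP => /connect_out_edge/(_ (strong v u))[y vy].
  by move: (noout y); rewrite vy.
have noout' y : G v y = false by apply/negbTE.
rewrite /rhoR /alpha_out /alpha_in (eq_filter (a2 := pred0) noin).
by rewrite (eq_filter (a2 := pred0) noout') filter_pred0 subrr maxxx.
Qed.

Lemma raise_le_potential (a0 : graph_fun R n) phi p v :
  balanced G (reweight a0 phi) -> (forall u, p u <= phi u) ->
  p v + rhoR G (reweight a0 p) v / 2 <= phi v.
Proof.
move=> bal p_le; case: (pselect (exists y, G v y)) => [[y vy]|noout]; last first.
  rewrite rhoR_no_out_edge ?mul0r ?addr0 // => y.
  by apply/negP => vy; apply: noout; exists y.
have [x xv xmax] := bal v y vy; rewrite /rhoR.
have [y' vy' ->] := alpha_out_attained (reweight a0 p) vy.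
have := alpha_in_ge (reweight a0 p) xv; have := xmax y' vy'.
have := p_le v; have := p_le x; have := p_le y'; rewrite /reweight.
by case: (leP 0 _) => _; lra.
Qed.

Lemma r_seq_le_potential (a0 : graph_fun R n) s phi :
  balanced G (reweight a0 phi) -> (forall v, 0 <= phi v) ->
  forall t v, r_seq G a0 s t v <= phi v.
Proof.
move=> bal phi_ge0; elim => [|t IH] v //=.
case: eqVneq => [->|_]; last by rewrite addr0.
by rewrite alpha_seq_reweight; apply: raise_le_potential.
Qed.

End Raising.

Theorem lemma1 (R : realType) (n : nat) (G : rel 'I_n)
  (a0 : graph_fun R n) (s : nat -> 'I_n) :
  strongly_connected G -> fair s ->
  (forall (t : nat) (v : 'I_n), r_seq G a0 s t v <= r_seq G a0 s t.+1 v) /\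
  (exists B : R, forall (t : nat) (v : 'I_n), r_seq G a0 s t v <= B) /\
  (exists rstar : 'I_n -> R, forall v : 'I_n,
      (fun t => r_seq G a0 s t v) @ \oo --> rstar v).
Proof.
move=> strong _.
have [phi [phi_ge0 phi_bal]] := exists_balanced_potential strong a0.
have r_le := r_seq_le_potential strong s phi_bal phi_ge0.
split; first exact: r_seq_nondecreasing.
split.
  by exists (\sum_v phi v) => t v; apply: le_trans (r_le t v) (ler_sum_term _ _).
exists (fun v => sup (range (fun t => r_seq G a0 s t v))) => v.
apply: nondecreasing_cvgn.
  by apply/nondecreasing_seqP => t; apply: r_seq_nondecreasing.
by exists (phi v) => _ [t _ <-].
Qed.
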